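(* Let $a$ be a smooth, positive, increasing function on $(0,\infty)$ and consider the two-dimensional Robertson–Walker spacetime with metric $ds^2=-dt^2+a^2(t)\,d\chi^2$, $t>0$, $\chi\in\mathbb{R}$. Let $\beta_0,\beta_1,\beta_2$ be the comoving worldlines $\chi=0$, $\chi=\chi_1$, $\chi=\chi_2$ respectively (each parametrized by $t$, which is its proper time). Consider any one of the following three configurations (in each, all events named are assumed to exist). Scenario I: Fix $\tau_0>0$. The spacelike geodesic $\Psi_0$ through $(\tau_0,0)$ orthogonal to $\beta_0$ meets $\beta_1$ at $(\tau_1,\chi_1)$ and $\beta_2$ at $(t^-,\chi_2)$; the spacelike geodesic $\Psi_1$ through $(\tau_1,\chi_1)$ orthogonal to $\beta_1$ meets $\beta_2$ at $(t^+,\chi_2)$. Let $v_{\mathrm{kin}1}$ be the kinematic velocity of $\beta_1$ relative to $\beta_0$ at proper time $\tau_0$, $v_{\mathrm{kin}3}$ the kinematic velocity of $\beta_2$ relative to $\beta_0$ at proper time $\tau_0$, and $v_{\mathrm{kin}2}$ the kinematic velocity of $\beta_2$ relative to $\beta_1$ at proper time $\tau_1$. Scenario II: The spacelike geodesic orthogonal to $\beta_0$ at $(t^-,0)$ meets $\beta_1$ at $(\tau_1,\chi_1)$; the spacelike geodesic orthogonal to $\beta_1$ at $(\tau_1,\chi_1)$ meets $\beta_2$ at $(\tau_2,\chi_2)$; and $(\tau_2,\chi_2)$ lies on the spacelike geodesic orthogonal to $\beta_0$ at $(t^+,0)$. Let $v_{\mathrm{kin}1}$ be the kinematic velocity of $\beta_1$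 relative to $\beta_0$ at proper time $t^-$, $v_{\mathrm{kin}2}$ that of $\beta_2$ relative to $\beta_1$ at proper time $\tau_1$, and $v_{\mathrm{kin}3}$ that of $\beta_2$ relative to $\beta_0$ at proper time $t^+$. Scenario III: Fix $\tau_0>0$. The spacelike geodesic orthogonal to $\beta_0$ at $(\tau_0,0)$ meets $\beta_1$ at $(t^+,\chi_1)$ and $\beta_2$ at $(\tau_2,\chi_2)$; the event $(\tau_2,\chi_2)$ lies on the spacelike geodesic orthogonal to $\beta_1$ at $(t^-,\chi_1)$. Let $v_{\mathrm{kin}1}$ be the kinematic velocity of $\beta_1$ relative to $\beta_0$ at proper time $\tau_0$, $v_{\mathrm{kin}2}$ that of $\beta_2$ relative to $\beta_1$ at proper time $t^-$, and $v_{\mathrm{kin}3}$ that of $\beta_2$ relative to $\beta_0$ at proper time $\tau_0$. Then in each scenario, $$1-v_{\mathrm{kin}3}^{2}=\frac{a^{2}(t^{-})}{a^{2}(t^{+})}\,(1-v_{\mathrm{kin}1}^{2})(1-v_{\mathrm{kin}2}^{2}).$$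
   Context: A comoving worldline is a curve $\chi=\text{const}$; its 4-velocity is $\partial_t$. For a comoving observer $\beta_j$ ($\chi=\chi_j$) at proper time $\tau$, the events ''spacelike (Fermi) simultaneous'' with $\beta_j(\tau)=(\tau,\chi_j)$ are those on the spacelike geodesic through $(\tau,\chi_j)$ orthogonal to $\partial_t$. If this geodesic meets a comoving particle with coordinate $\chi$ at the event $(t,\chi)$, the kinematic velocity of that particle relative to $\beta_j$ at proper time $\tau$ is defined as follows: parallel transport the particle's 4-velocity along this geodesic to $(\tau,\chi_j)$ and write the result uniquely as $\gamma(u+V)$ with $u=\partial_t$ the observer's 4-velocity, $V$ orthogonal to $u$, $\gamma=1/\sqrt{1-g(V,V)}$; then $V=v_{\mathrm{kin}}\,\frac{1}{a(\tau)}\partial_\chi$, and the scalar $v_{\mathrm{kin}}$ (possibly negative) is the kinematic velocity. It is known that $v_{\mathrm{kin}}=\mathrm{sgn}(\chi-\chi_j)\sqrt{1-a^2(t)/a^2(\tau)}$. *)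

From Stdlib Require Import Reals Lra.
From Coquelicot Require Import Coquelicot.
Open Scope R_scope.

Definition scale_factor (a : R -> R) : Prop :=
  (forall n t, 0 < t -> ex_derive_n a n t) /\
  (forall t, 0 < t -> 0 < a t) /\
  (forall x y, 0 < x -> x < y -> a x < a y).

(* Metric ds^2 = -dt^2 + a(t)^2 dchi^2.  Nonzero Christoffel symbols:
   Gamma^t_{chi chi} = a a',  Gamma^chi_{t chi} = Gamma^chi_{chi t} = a'/a. *)

Definition is_geodesic (a : R -> R) (T X dT dX : R -> R) (s1 : R) : Prop :=
  forall s, 0 <= s <= s1 ->
    0 < T s /\
    is_derive T s (dT s) /\ is_derive X s (dX s) /\
    is_derive dT s (- (a (T s) * Derive a (T s)) * (dX s) ^ 2) /\
    is_derive dX s (- 2 * (Derive a (T s) / a (T s)) * dT s * dX s).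

(* The spacelike geodesic through (tau, chij) orthogonal to d_t (the
   4-velocity of the comoving observer chi = chij), followed from
   parameter 0 to parameter s1 >= 0, where it reaches the event (t, chi). *)
Definition orth_geod_segment (a : R -> R) (tau chij t chi : R)
    (T X dT dX : R -> R) (s1 : R) : Prop :=
  0 <= s1 /\ is_geodesic a T X dT dX s1 /\
  T 0 = tau /\ X 0 = chij /\ dT 0 = 0 /\ dX 0 <> 0 /\
  T s1 = t /\ X s1 = chi.

Definition orth_meets (a : R -> R) (tau chij t chi : R) : Prop :=
  exists T X dT dX s1, orth_geod_segment a tau chij t chi T X dT dX s1.

Definition is_parallel (a : R -> R) (T dT dX W0 W1 : R -> R) (s1 : R) : Prop :=
  forall s, 0 <= s <= s1 ->
    is_derive W0 s (- (a (T s) * Derive a (T s)) * dX s * W1 s) /\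
    is_derive W1 s (- (Derive a (T s) / a (T s)) * (dT s * W1 s + dX s * W0 s)).

(* v is the kinematic velocity, relative to the comoving observer chi = chij
   at proper time tau, of the comoving particle chi, whose worldline meets the
   orthogonal spacelike geodesic at (t, chi): the particle's 4-velocity d_t,
   parallel transported along the geodesic back to (tau, chij), equals
   gamma (u + V) with u = d_t, V = v (1/a(tau)) d_chi, g(V,V) = v^2,
   gamma = 1/sqrt(1 - v^2). *)
Definition vkin (a : R -> R) (tau chij chi t v : R) : Prop :=
  exists T X dT dX s1 W0 W1,
    orth_geod_segment a tau chij t chi T X dT dX s1 /\
    is_parallel a T dT dX W0 W1 s1 /\
    W0 s1 = 1 /\ W1 s1 = 0 /\
    v ^ 2 < 1 /\
    W0 0 = 1 / sqrt (1 - v ^ 2) /\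
    W1 0 = (1 / sqrt (1 - v ^ 2)) * (v * / a tau).

(* The kinematic velocity depends only on the scale factor at the two ends of the
   orthogonal geodesic: 1 - v^2 = a(t)^2 / a(tau)^2.  Along a geodesic the metric
   pairing of parallel fields is conserved, and so is the momentum a^2 dchi/ds of
   the Killing field d_chi.  At the start the geodesic is orthogonal to d_t; at
   the end the transported field is d_t itself.  Pairing the transported field
   with the velocity, the velocity with itself, and d_chi with the velocity then
   pins down the Lorentz factor.  In each scenario the three ratios telescope. *)
From Stdlib Require Import Reals Lra.
From Coquelicot Require Import Coquelicot.
Open Scope R_scope.

Lemma is_derive_const_on (f : R -> R) (s1 : R) : 0 <= s1 ->
  (forall s, 0 <= s <= s1 -> is_derive f s 0) -> f s1 = f 0.
Proof.
  intros Hs1 Hd.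
  destruct (MVT_gen f 0 s1 (fun _ => 0)) as [c [_ Hc]].
  - intros x Hx. rewrite Rmin_left, Rmax_right in Hx by lra. apply Hd; lra.
  - intros x Hx. rewrite Rmin_left, Rmax_right in Hx by lra.
    apply continuity_pt_filterlim, (ex_derive_continuous (K:=R_AbsRing) (V:=R_NormedModule)).
    exists 0. apply Hd; lra.
  - lra.
Qed.

Lemma is_derive_ext_val (f : R -> R) (x l l' : R) :
  is_derive f x l -> l = l' -> is_derive f x l'.
Proof. now intros H ->. Qed.

Definition metric_pairing (a : R -> R) (t u0 u1 w0 w1 : R) : R :=
  - u0 * w0 + a t ^ 2 * u1 * w1.

Lemma geodesic_velocity_parallel (a T X dT dX : R -> R) (s1 : R) :
  is_geodesic a T X dT dX s1 -> is_parallel a T dT dX dT dX s1.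
Proof.
  intros Hg s Hs. destruct (Hg s Hs) as (_ & _ & _ & HdT & HdX). split.
  - eapply is_derive_ext_val; [exact HdT | ring].
  - eapply is_derive_ext_val; [exact HdX | ring].
Qed.

Section Conservation.

Variable a : R -> R.
Hypothesis a_pos : forall t, 0 < t -> 0 < a t.
Hypothesis a_derivable : forall t, 0 < t -> ex_derive a t.

Variables T X dT dX : R -> R.
Variable s1 : R.
Hypothesis s1_ge0 : 0 <= s1.
Hypothesis geodesic : is_geodesic a T X dT dX s1.

Lemma is_derive_scale_sq s : 0 <= s <= s1 ->
  is_derive (fun y => a (T y) ^ 2) s (2 * a (T s) * Derive a (T s) * dT s).
Proof.
  intros Hs. destruct (geodesic s Hs) as (HT & HdT & _).
  eapply is_derive_ext_val.
  - apply is_derive_pow, (is_derive_comp a T s _ _ (Derive_correct _ _ (a_derivable _ HT)) HdT).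
  - simpl. unfold scal; simpl. unfold mult; simpl. ring.
Qed.

Lemma geodesic_momentum_const :
  a (T s1) ^ 2 * dX s1 = a (T 0) ^ 2 * dX 0.
Proof.
  apply (is_derive_const_on (fun s => a (T s) ^ 2 * dX s)); auto.
  intros s Hs. destruct (geodesic s Hs) as (HT & _ & _ & _ & HdX).
  pose proof (a_pos _ HT).
  eapply is_derive_ext_val.
  - apply Derive.is_derive_mult; [apply is_derive_scale_sq; exact Hs | exact HdX].
  - cbv beta. field. lra.
Qed.

Lemma parallel_pairing_const (U0 U1 W0 W1 : R -> R) :
  is_parallel a T dT dX U0 U1 s1 -> is_parallel a T dT dX W0 W1 s1 ->
  metric_pairing a (T s1) (U0 s1) (U1 s1) (W0 s1) (W1 s1)
  = metric_pairing a (T 0) (U0 0) (U1 0) (W0 0) (W1 0).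
Proof.
  intros HU HW. unfold metric_pairing.
  apply (is_derive_const_on
           (fun s => - U0 s * W0 s + a (T s) ^ 2 * U1 s * W1 s)); auto.
  intros s Hs. destruct (geodesic s Hs) as (HT & _).
  destruct (HU s Hs) as [HU0 HU1]. destruct (HW s Hs) as [HW0 HW1].
  pose proof (a_pos _ HT).
  eapply is_derive_ext_val.
  - apply (is_derive_plus (fun s => - U0 s * W0 s)).
    + apply Derive.is_derive_mult; [exact (is_derive_opp U0 s _ HU0) | exact HW0].
    + apply Derive.is_derive_mult; [|exact HW1].
      apply Derive.is_derive_mult; [apply is_derive_scale_sq; exact Hs | exact HU1].
  - cbv beta. unfold plus, opp; simpl. field. lra.
Qed.

End Conservation.

Lemma lorentz_factor_of_invariants (A B p q r g v : R) :
  0 < A -> 0 < B -> p <> 0 -> g ^ 2 * (1 - v ^ 2) = 1 ->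
  B ^ 2 * r = A ^ 2 * p ->
  - q * q + B ^ 2 * r * r = A ^ 2 * p * p ->
  - q = A ^ 2 * p * (g * (v / A)) ->
  1 - v ^ 2 = B ^ 2 / A ^ 2.
Proof.
  intros HA HB Hp Hg Hmom Hnorm Hpair.
  assert (Hr : r = A ^ 2 * p / B ^ 2) by (rewrite <- Hmom; field; lra).
  assert (Hq : q = - A * p * g * v) by (rewrite <- (Ropp_involutive q), Hpair; field; lra).
  rewrite Hr, Hq in Hnorm.
  (* the norm identity says A^2 / B^2 = 1 + g^2 v^2, which is g^2 *)
  assert (Hratio : A ^ 2 / B ^ 2 = g ^ 2).
  { assert (H : A ^ 2 * p ^ 2 * (A ^ 2 / B ^ 2 - g ^ 2) = 0).
    { rewrite <- (Rminus_diag_eq _ _ Hnorm).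
      replace (g ^ 2) with (1 + g ^ 2 * v ^ 2) by lra. field. lra. }
    apply Rmult_integral in H as [H | H]; [|lra].
    exfalso. apply (Rmult_integral_contrapositive_currified (A ^ 2) (p ^ 2));
      auto; apply pow_nonzero; lra. }
  assert (Hg0 : g ^ 2 <> 0) by (intro E; rewrite E in Hg; lra).
  apply (Rmult_eq_reg_l (g ^ 2)); auto. rewrite Hg, <- Hratio. field. lra.
Qed.

Lemma vkin_lorentz_factor (a : R -> R) (tau chij chi t v : R) :
  scale_factor a -> vkin a tau chij chi t v ->
  0 < a tau /\ 0 < a t /\ 1 - v ^ 2 = a t ^ 2 / a tau ^ 2.
Proof.
  intros (Hsmooth & Hpos & _)
    (T & X & dT & dX & s1 & W0 & W1 &
     (Hs1 & Hg & HT0 & _ & HdT0 & HdX0 & HT1 & _) & Hpar & HW0 & HW1 & Hv & HW00 & HW10).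
  assert (Hder : forall t, 0 < t -> ex_derive a t) by exact (fun t Ht => Hsmooth 1%nat t Ht).
  assert (HA : 0 < a tau) by (rewrite <- HT0; apply Hpos, (Hg 0); lra).
  assert (HB : 0 < a t) by (rewrite <- HT1; apply Hpos, (Hg s1); lra).
  split; [exact HA | split; [exact HB |]].
  pose proof (geodesic_momentum_const a Hpos Hder T X dT dX s1 Hs1 Hg) as Hmom.
  pose proof (geodesic_velocity_parallel a T X dT dX s1 Hg) as Hvel.
  pose proof (parallel_pairing_const a Hpos Hder T X dT dX s1 Hs1 Hg _ _ _ _ Hvel Hvel) as Hnorm.
  pose proof (parallel_pairing_const a Hpos Hder T X dT dX s1 Hs1 Hg _ _ _ _ Hvel Hpar) as Hpair.
  unfold metric_pairing in Hnorm, Hpair.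
  rewrite HT0, HT1, HdT0 in *. rewrite HW0, HW1, HW00, HW10 in Hpair.
  apply (lorentz_factor_of_invariants (a tau) (a t) (dX 0) (dT s1) (dX s1) (1 / sqrt (1 - v ^ 2)));
    auto; [| lra | lra].
  assert (Hs : 0 < sqrt (1 - v ^ 2)) by (apply sqrt_lt_R0; lra).
  replace (1 - v ^ 2) with (sqrt (1 - v ^ 2) ^ 2) at 2 by (rewrite <- Rsqr_pow2, Rsqr_sqrt; lra).
  field. lra.
Qed.

Theorem theorem1 (a : R -> R) (chi1 chi2 : R) :
  scale_factor a ->
  (* Scenario I *)
  (forall tau0 tau1 tm tp v1 v2 v3,
     0 < tau0 ->
     orth_meets a tau0 0 tau1 chi1 ->
     orth_meets a tau0 0 tm chi2 ->
     orth_meets a tau1 chi1 tp chi2 ->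
     vkin a tau0 0 chi1 tau1 v1 ->
     vkin a tau0 0 chi2 tm v3 ->
     vkin a tau1 chi1 chi2 tp v2 ->
     1 - v3 ^ 2 = (a tm ^ 2 / a tp ^ 2) * (1 - v1 ^ 2) * (1 - v2 ^ 2)) /\
  (* Scenario II *)
  (forall tm tp tau1 tau2 v1 v2 v3,
     0 < tm -> 0 < tp ->
     orth_meets a tm 0 tau1 chi1 ->
     orth_meets a tau1 chi1 tau2 chi2 ->
     orth_meets a tp 0 tau2 chi2 ->
     vkin a tm 0 chi1 tau1 v1 ->
     vkin a tau1 chi1 chi2 tau2 v2 ->
     vkin a tp 0 chi2 tau2 v3 ->
     1 - v3 ^ 2 = (a tm ^ 2 / a tp ^ 2) * (1 - v1 ^ 2) * (1 - v2 ^ 2)) /\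
  (* Scenario III *)
  (forall tau0 tp tau2 tm v1 v2 v3,
     0 < tau0 -> 0 < tm ->
     orth_meets a tau0 0 tp chi1 ->
     orth_meets a tau0 0 tau2 chi2 ->
     orth_meets a tm chi1 tau2 chi2 ->
     vkin a tau0 0 chi1 tp v1 ->
     vkin a tm chi1 chi2 tau2 v2 ->
     vkin a tau0 0 chi2 tau2 v3 ->
     1 - v3 ^ 2 = (a tm ^ 2 / a tp ^ 2) * (1 - v1 ^ 2) * (1 - v2 ^ 2)).
Proof.
  intros Ha.
  split; [|split]; intros;
    repeat match goal with
    | K : vkin _ _ _ _ _ _ |- _ =>
        destruct (vkin_lorentz_factor _ _ _ _ _ _ Ha K) as (? & ? & ->); clear K
    end;
    field; repeat split; lra.
Qed.
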